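(* Let $p$ be a prime and let $n\ge 1$ be an integer. Let $A$ be a commutative ring with $p^nA=0$, and let $F\colon A\to A$ be a lifting of Frobenius, i.e. a ring endomorphism with $F(x)\equiv x^p \pmod{pA}$ for all $x\in A$. Let $I\subseteq A$ be an ideal such that $F(I)\subseteq I^p+p^mA$ for some integer $1\le m\le n$. Then \[ F(I^a)\subseteq I^a \quad\text{for every integer}\quad a\ \ge\ \frac{p}{p-1}\left(\left\lceil \frac{n}{m}\right\rceil-1\right). \] In particular, if $p^2A=0$, then $F(I^2)\subseteq I^2$ for every ideal $I\subseteq A$.
   Context: The condition $F(I)\subseteq I^p+pA$ (the case $m=1$) holds automatically for any ideal $I$ and any lifting of Frobenius $F$. *)

From mathcomp Require Import all_boot all_order all_algebra.
Set Implicit Arguments. Unset Strict Implicit. Unset Printing Implicit Defensive.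
Import Order.TTheory GRing.Theory Num.Theory.
Local Open Scope ring_scope.

Section Ideals.
Variable A : comPzRingType.

Definition is_ideal (I : A -> Prop) : Prop :=
  [/\ I 0, (forall x y, I x -> I y -> I (x + y)) & (forall r x, I x -> I (r * x))].

Definition ideal_gen (S : A -> Prop) : A -> Prop :=
  fun x => forall J, is_ideal J -> (forall y, S y -> J y) -> J x.

Definition ideal_mul (I J : A -> Prop) : A -> Prop :=
  ideal_gen (fun z => exists x y, [/\ I x, J y & z = x * y]).

Fixpoint ideal_pow (I : A -> Prop) (a : nat) : A -> Prop :=
  match a with
  | 0%N => fun _ => True
  | a'.+1 => ideal_mul (ideal_pow I a') I
  end.

Definition ideal_add (I J : A -> Prop) : A -> Prop :=
  fun z => exists x y, [/\ I x, J y & z = x + y].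

Definition ideal_scal (c : A) : A -> Prop := fun z => exists y, z = c * y.

Definition frobenius_lift (p : nat) (F : A -> A) : Prop :=
  forall x, exists y, F x = x ^+ p + p%:R * y.

End Ideals.

(* If F(I) lies in I^p + cA, then F(I^b) lies in the ideal generated by the
   products c^s I^(p(b-s)), s <= b, as the binomial expansion of (I^p + cA)^b
   suggests.  For c = p^m the terms with ms >= n vanish, and each remaining
   term lies in I^a as soon as p(a - s) >= a, which is what the bound on a
   guarantees.  The case m = 1 needs no hypothesis since F(x) = x^p mod pA. *)

From mathcomp Require Import all_boot all_order all_algebra.
From mathcomp Require Import zify.
Set Implicit Arguments. Unset Strict Implicit. Unset Printing Implicit Defensive.
Import Order.TTheory GRing.Theory Num.Theory.
Local Open Scope ring_scope.

Section IdealArithmetic.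
Variable A : comPzRingType.
Implicit Types (S I J T : A -> Prop) (x y r : A).

Lemma ideal0 J : is_ideal J -> J 0.
Proof. by case. Qed.

Lemma idealD J x y : is_ideal J -> J x -> J y -> J (x + y).
Proof. by case=> _ + _; apply. Qed.

Lemma idealMl J r x : is_ideal J -> J x -> J (r * x).
Proof. by case=> _ _; apply. Qed.

Lemma idealMr J r x : is_ideal J -> J x -> J (x * r).
Proof. by rewrite mulrC; apply: idealMl. Qed.

Lemma ideal_colon T x : is_ideal T -> is_ideal (fun y => T (x * y)).
Proof.
move=> idT; split=> [|y z Ty Tz|r y Ty].
- by rewrite mulr0; apply: ideal0.
- by rewrite mulrDr; apply: idealD.
- by rewrite mulrCA; apply: idealMl.
Qed.

Lemma ideal_preim (F : {rmorphism A -> A}) T :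
  is_ideal T -> is_ideal (fun x => T (F x)).
Proof.
move=> idT; split=> [|x y Tx Ty|r x Tx].
- by rewrite rmorph0; apply: ideal0.
- by rewrite rmorphD; apply: idealD.
- by rewrite rmorphM; apply: idealMl.
Qed.

Lemma ideal_gen_ideal S : is_ideal (ideal_gen S).
Proof.
split=> [J [] //|x y Sx Sy J idJ SJ|r x Sx J idJ SJ].
- by apply: idealD => //; [apply: Sx | apply: Sy].
- by apply: idealMl => //; apply: Sx.
Qed.

Lemma ideal_gen_sub S x : S x -> ideal_gen S x.
Proof. by move=> Sx J _; apply. Qed.

Lemma ideal_gen_min S J x :
  is_ideal J -> (forall y, S y -> J y) -> ideal_gen S x -> J x.
Proof. by move=> idJ SJ; apply. Qed.

Lemma ideal_gen_mul S1 S2 T x y : is_ideal T ->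
  (forall u v, S1 u -> S2 v -> T (u * v)) ->
  ideal_gen S1 x -> ideal_gen S2 y -> T (x * y).
Proof.
move=> idT S12T S1x.
pose T' u := forall v, ideal_gen S2 v -> T (u * v).
apply: (@ideal_gen_min S1 T' x) => // [|u S1u v].
- split=> [v _|u w Tu Tw v S2v|r u Tu v S2v].
  + by rewrite mul0r; apply: ideal0.
  + by rewrite mulrDl; apply: idealD => //; [apply: Tu | apply: Tw].
  + by rewrite -mulrA; apply: idealMl => //; apply: Tu.
- apply: (@ideal_gen_min S2 (fun v => T (u * v))); first exact: ideal_colon.
  by move=> w; apply: S12T.
Qed.

Lemma ideal_pow_ideal I a : is_ideal (ideal_pow I a).
Proof. by case: a => [|a] /=; [split | apply: ideal_gen_ideal]. Qed.

Lemma ideal_powD I i j x y :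
  ideal_pow I i x -> ideal_pow I j y -> ideal_pow I (i + j) (x * y).
Proof.
elim: j y => [|j IHj] y Iix Ijy.
  by rewrite addn0; apply: idealMr => //; apply: ideal_pow_ideal.
rewrite addnS; apply: (ideal_gen_min (J := fun y => ideal_pow I _ (x * y))) Ijy.
  exact/ideal_colon/ideal_pow_ideal.
move=> _ [u [v [Iju Iv ->]]]; rewrite mulrA; apply: ideal_gen_sub.
by exists (x * u), v; split; first exact: IHj.
Qed.

Lemma ideal_pow_leq I i j x : (i <= j)%N -> ideal_pow I j x -> ideal_pow I i x.
Proof.
move=> /subnK <-; rewrite addnC; elim: (j - i)%N x => [|k IHk] x.
  by rewrite addn0.
rewrite addnS => Ix; apply: IHk; apply: ideal_gen_min Ix; first exact: ideal_pow_ideal.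
by move=> _ [u [v [Iu _ ->]]]; apply: idealMr => //; apply: ideal_pow_ideal.
Qed.

Lemma ideal_pow_expr I x b : I x -> ideal_pow I b (x ^+ b).
Proof.
move=> Ix; elim: b => //= b IHb.
by rewrite exprSr; apply: ideal_gen_sub; exists (x ^+ b), x.
Qed.

Lemma frobenius_lift_ideal p (F : A -> A) I :
  frobenius_lift p F ->
  forall x, I x -> ideal_add (ideal_pow I p) (ideal_scal (p%:R ^+ 1)) (F x).
Proof.
move=> Flift x Ix; have [y ->] := Flift x.
exists (x ^+ p), (p%:R * y); split=> //; first exact: ideal_pow_expr.
by exists y; rewrite expr1.
Qed.

End IdealArithmetic.

Section FrobeniusImage.
Variables (A : comPzRingType) (I : A -> Prop) (p : nat) (c : A).

(* The ideal sum over s <= b of c^s I^(p(b-s)), an upper bound for (I^p + cA)^b. *)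
Definition frob_bound (b : nat) : A -> Prop :=
  ideal_gen (fun z => exists s y,
    [/\ (s <= b)%N, ideal_pow I (p * (b - s)) y & z = c ^+ s * y]).

Lemma frob_bound_ideal b : is_ideal (frob_bound b).
Proof. exact: ideal_gen_ideal. Qed.

Lemma frob_bound_gen b s y :
  (s <= b)%N -> ideal_pow I (p * (b - s)) y -> frob_bound b (c ^+ s * y).
Proof. by move=> sb Iy; apply: ideal_gen_sub; exists s, y. Qed.

Lemma frob_bound1 x : ideal_add (ideal_pow I p) (ideal_scal c) x -> frob_bound 1 x.
Proof.
move=> [y [_ [Ipy [w ->] ->]]]; apply: (idealD (frob_bound_ideal 1)).
- by rewrite -[y]mul1r -(expr0 c); apply: frob_bound_gen; rewrite ?muln1.
- by rewrite -[c]expr1; apply: frob_bound_gen; rewrite ?subnn ?muln0.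
Qed.

Lemma frob_boundM b x y :
  frob_bound b x -> frob_bound 1 y -> frob_bound b.+1 (x * y).
Proof.
apply: ideal_gen_mul; first exact: frob_bound_ideal.
move=> _ _ [s [u [sb Iu ->]]] [t [v [t1 Iv ->]]].
rewrite mulrACA -exprD; apply: frob_bound_gen; first by rewrite -addn1 leq_add.
have -> : (p * (b.+1 - (s + t)) = p * (b - s) + p * (1 - t))%N.
  by rewrite -mulnDr; congr (p * _)%N; lia.
exact: ideal_powD.
Qed.

Lemma rmorph_ideal_pow_frob_bound (F : {rmorphism A -> A}) :
  (forall x, I x -> ideal_add (ideal_pow I p) (ideal_scal c) (F x)) ->
  forall b x, ideal_pow I b x -> frob_bound b (F x).
Proof.
move=> FI; elim=> [|b IHb] x Ibx.
  by rewrite -[F x]mul1r -(expr0 c); apply: frob_bound_gen; rewrite ?muln0.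
apply: (ideal_gen_min (ideal_preim F (frob_bound_ideal b.+1))) Ibx.
move=> _ [u [v [Ibu Iv ->]]]; rewrite rmorphM.
apply: frob_boundM; [exact: IHb | apply: frob_bound1; exact: FI].
Qed.

Lemma frob_bound_sub_ideal_pow k a x :
  (0 < p)%N -> c ^+ k = 0 -> (p * (k - 1) <= (p - 1) * a)%N ->
  frob_bound a x -> ideal_pow I a x.
Proof.
move=> p_gt0 ck0 pka; apply: ideal_gen_min; first exact: ideal_pow_ideal.
move=> _ [s [y [sa Iy ->]]]; have [ks | sk] := leqP k s.
  by rewrite -(subnK ks) exprD ck0 mulr0 mul0r; exact: ideal0 (ideal_pow_ideal I a).
apply: idealMl; first exact: ideal_pow_ideal.
have a_le : (a <= p * (a - s))%N by nia.
exact: ideal_pow_leq a_le Iy.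
Qed.

End FrobeniusImage.

Theorem rmorph_ideal_pow_stable (A : comPzRingType) (F : {rmorphism A -> A})
    (I : A -> Prop) (p k a : nat) (c : A) :
  (0 < p)%N -> c ^+ k = 0 -> (p * (k - 1) <= (p - 1) * a)%N ->
  (forall x, I x -> ideal_add (ideal_pow I p) (ideal_scal c) (F x)) ->
  forall x, ideal_pow I a x -> ideal_pow I a (F x).
Proof.
move=> p_gt0 ck0 pka FI x Iax.
apply: (frob_bound_sub_ideal_pow p_gt0 ck0 pka).
exact: rmorph_ideal_pow_frob_bound FI _ _ Iax.
Qed.

Lemma ceil_exponent_bound (p n m a : nat) :
  (1 < p)%N -> (0 < m)%N ->
  (p%:Q / (p%:Q - 1)) * ((Num.ceil (n%:Q / m%:Q))%:~R - 1) <= a%:Q ->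
  exists k : nat, (n <= m * k)%N /\ (p * (k - 1) <= (p - 1) * a)%N.
Proof.
move=> p_gt1 m_gt0; have m_gt0Q : 0 < m%:Q by rewrite ltr0n.
have [k ceil_k] : exists k : nat, Num.ceil (n%:Q / m%:Q) = k%:Z.
  exists `|Num.ceil (n%:Q / m%:Q)|%N.
  by rewrite gez0_abs // ceil_ge0 (@lt_le_trans _ _ 0) // divr_ge0.
rewrite ceil_k => bound_a; exists k; split.
  have := ceil_ge (n%:Q / m%:Q).
  by rewrite ceil_k ler_pdivrMr // -!pmulrn -natrM ler_nat mulnC.
case: k {ceil_k} bound_a => [|k]; first by rewrite sub0n muln0.
have p1_gt0 : 0 < p%:Q - 1 by rewrite -pmulrn subr_gt0 ltr1n.
rewrite -!pmulrn -[k.+1]addn1 natrD addrK mulrAC ler_pdivrMr //.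
by rewrite -(natrB _ (ltnW p_gt1)) -!natrM ler_nat addnK (mulnC (p - 1)%N).
Qed.

Theorem lemma1p1 (p n : nat) (A : comPzRingType) (F : {rmorphism A -> A}) :
  prime p -> (1 <= n)%N ->
  (p%:R : A) ^+ n = 0 ->
  frobenius_lift p F ->
  (forall (I : A -> Prop) (m : nat),
      is_ideal I -> (1 <= m <= n)%N ->
      (forall x, I x -> ideal_add (ideal_pow I p) (ideal_scal ((p%:R : A) ^+ m)) (F x)) ->
      forall a : nat,
        (p%:Q / (p%:Q - 1)) * ((Num.ceil (n%:Q / m%:Q))%:~R - 1) <= a%:Q ->
        forall x, ideal_pow I a x -> ideal_pow I a (F x))
  /\
  ((p%:R : A) ^+ 2 = 0 ->
   forall I : A -> Prop, is_ideal I ->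
     forall x, ideal_pow I 2 x -> ideal_pow I 2 (F x)).
Proof.
move=> p_prime _ pn0 Flift; have p_gt1 := prime_gt1 p_prime.
have p_gt0 := ltnW p_gt1; split.
- move=> I m _ /andP[m_gt0 _] FI a bound_a.
  have [k [nmk pka]] := ceil_exponent_bound p_gt1 m_gt0 bound_a.
  apply: rmorph_ideal_pow_stable p_gt0 _ pka FI.
  by rewrite -exprM -(subnK nmk) exprD pn0 mulr0.
- move=> p20 I _.
  apply: (rmorph_ideal_pow_stable (k := 2) (c := p%:R ^+ 1)) p_gt0 _ _ _.
  + by rewrite expr1.
  + by rewrite subn1; nia.
  + exact: frobenius_lift_ideal.
Qed.
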